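(* Let $k\ge2$, $M\ge1$, $N\ge1$, and let $g\colon[N]^M\to\{0,1\}^k$ be a function such that no single input coordinate affects all $k$ output bits of $g$. Let $\mathbf{Z}=g(\mathbf{U}_{[N]}^M)$. Then at least one of the following holds: (1) $\Pr[\mathbf{Z}\notin\{0^k,1^k\}]\ge \frac{1}{100k}$; or (2) there is $z\in\{0^k,1^k\}$ with $\Pr[\mathbf{Z}=z]\ge 2/3$.
   Context: $\mathbf{U}_{[N]}^M$ is the uniform distribution on $[N]^M$. An input coordinate affects an output bit if that bit depends on the coordinate (i.e., changing only that coordinate can change the bit). *)

From HB Require Import structures.
From mathcomp Require Import all_boot all_order all_algebra.
Set Implicit Arguments. Unset Strict Implicit. Unset Printing Implicit Defensive.
Import Order.TTheory GRing.Theory Num.Theory.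

Definition inputs (M N : nat) := {ffun 'I_M -> 'I_N}.
Definition outputs (k : nat) := {ffun 'I_k -> bool}.

Definition affects (M N k : nat) (g : inputs M N -> outputs k) (i : 'I_M) (j : 'I_k) : Prop :=
  exists x y : inputs M N,
    (forall i' : 'I_M, i' != i -> x i' = y i') /\ g x j != g y j.

Definition unif_prob (T : finType) (A : pred T) : rat :=
  (#|[set x : T | A x]|%:R / #|T|%:R)%R.

Definition zeros (k : nat) : outputs k := [ffun => false].
Definition ones (k : nat) : outputs k := [ffun => true].

(* Hybrid argument.  Give each input coordinate i an output bit c i that it
   does not affect, and for inputs x, y let the t-th hybrid take coordinate i
   from y when c i < t and from x otherwise.  Consecutive hybrids t, t+1 differ
   only on coordinates that do not affect bit t, so if neither lies in the set
   B of non-constant outputs, both are constant and agree on bit t, hence are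
   equal.  A pair with g x = 0^k and g y = 1^k therefore meets B along its k+1
   hybrids, and each hybrid of a uniform pair is uniform; this gives
   P(0^k) P(1^k) <= 2k P(B).  If P(B) < 1/(100k) and neither constant output
   has probability 2/3, both have probability about 1/3, contradicting this. *)

From mathcomp Require Import all_boot all_order all_algebra.
From mathcomp Require Import zify.
Import Order.TTheory GRing.Theory Num.Theory.

Set Implicit Arguments.
Unset Strict Implicit.
Unset Printing Implicit Defensive.

Lemma card_bigcup_ord_le (T : finType) (n : nat) (F : 'I_n -> {set T}) :
  #|\bigcup_(t < n) F t| <= \sum_(t < n) #|F t|.
Proof.
elim/big_ind2: _ => // [|A a B b le_Aa le_Bb]; first by rewrite cards0.
exact: leq_trans (leq_card_setU _ _) (leq_add le_Aa le_Bb).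
Qed.

Section Hybrid.

Variables (I V : finType) (c : I -> nat).

Definition hybrid (t : nat) (x y : {ffun I -> V}) : {ffun I -> V} :=
  [ffun i => if c i < t then y i else x i].

Lemma hybrid0 (x y : {ffun I -> V}) : hybrid 0 x y = x.
Proof. by apply/ffunP => i; rewrite ffunE. Qed.

Lemma hybrid_ge (t : nat) (x y : {ffun I -> V}) :
  (forall i, c i < t) -> hybrid t x y = y.
Proof. by move=> ct; apply/ffunP => i; rewrite ffunE ct. Qed.

Lemma hybridS_eq (t : nat) (x y : {ffun I -> V}) (i : I) :
  c i != t -> hybrid t.+1 x y i = hybrid t x y i.
Proof. by rewrite !ffunE ltnS leq_eqVlt => /negbTE->. Qed.

(* (x, y) |-> (hybrid t x y, hybrid t y x) is an involution on pairs. *)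
Lemma card_hybrid_preim (t : nat) (B : {set {ffun I -> V}}) :
  #|[set p : {ffun I -> V} * {ffun I -> V} | hybrid t p.1 p.2 \in B]|
    = #|B| * #|{ffun I -> V}|.
Proof.
pose s (p : {ffun I -> V} * {ffun I -> V}) := (hybrid t p.1 p.2, hybrid t p.2 p.1).
have sK : involutive s.
  move=> [x y]; congr pair; apply/ffunP => i; rewrite !ffunE; by case: (c i < t).
have -> : [set p | hybrid t p.1 p.2 \in B] = s @^-1: setX B setT.
  by apply/setP => p; rewrite !inE andbT.
by rewrite card_preimset ?cardsX ?cardsT //; apply: inv_inj.
Qed.

End Hybrid.

Lemma eq_on_unaffected (M N k : nat) (g : inputs M N -> outputs k) (j : 'I_k)
    (S : pred 'I_M) :
  (forall i, S i -> ~ affects g i j) ->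
  forall x y : inputs M N, (forall i, ~~ S i -> x i = y i) -> g x j = g y j.
Proof.
move=> unaffS x y; have [n] : exists n, #|[pred i | x i != y i]| = n by eexists.
elim: n x => [|n IHn] x n_diff eq_out.
  suff -> : x = y by [].
  apply/ffunP => i; apply/eqP; move/card0_eq: n_diff => /(_ i).
  by rewrite !inE => /negbFE.
have /card_gt0P[i0] : 0 < #|[pred i | x i != y i]| by rewrite n_diff.
rewrite inE => x_i0.
have S_i0 : S i0 by apply/negPn/negP => /eq_out/eqP; rewrite (negbTE x_i0).
pose x' : inputs M N := [ffun i => if i == i0 then y i0 else x i].
have -> : g x j = g x' j.
  apply/eqP/negPn/negP => ne_x'; apply: (unaffS i0 S_i0); exists x, x'.
  by split=> // i /negbTE i_i0; rewrite ffunE i_i0.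
apply: IHn => [|i S'i]; last first.
  rewrite ffunE; case: eqP => [i_i0|_]; last exact: eq_out.
  by move: S'i; rewrite i_i0 S_i0.
move: n_diff; rewrite (cardD1 i0) inE x_i0 add1n => -[<-].
apply: eq_card => i; rewrite !inE ffunE; case: (i =P i0) => [->|_] //=.
by rewrite eqxx.
Qed.

Definition nonconst_outputs (k : nat) : pred (outputs k) :=
  fun z => (z != zeros k) && (z != ones k).

Lemma eq_const_outputs (k : nat) (z w : outputs k) (j : 'I_k) :
  ~~ nonconst_outputs z -> ~~ nonconst_outputs w -> z j = w j -> z = w.
Proof.
rewrite /nonconst_outputs !negb_and !negbK.
by move=> /orP[]/eqP-> /orP[]/eqP->; rewrite !ffunE.
Qed.

Lemma card_le_const_nonconst (T : finType) (k : nat) (f : T -> outputs k) :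
  #|T| <= #|[set x | f x == zeros k]| + #|[set x | f x == ones k]|
          + #|[set x | nonconst_outputs (f x)]|.
Proof.
rewrite -cardsT -addnA.
apply: leq_trans (leq_add (leqnn _) (leq_card_setU _ _)).
apply: leq_trans (leq_card_setU _ _); apply/subset_leq_card/subsetP => x _.
by rewrite !inE /nonconst_outputs; case: (f x == zeros k); case: (f x == ones k).
Qed.

Section HybridArgument.

Variables (M N k : nat) (g : inputs M N -> outputs k) (c : 'I_M -> 'I_k).
Hypothesis c_unaffected : forall i, ~ affects g i (c i).

Let T := inputs M N.
Let h (t : nat) (x y : T) : T := hybrid (fun i => nat_of_ord (c i)) t x y.
Let B : {set T} := [set x | nonconst_outputs (g x)].

Lemma hybrid_step (t : 'I_k) (x y : T) :
  h t x y \notin B -> h t.+1 x y \notin B -> g (h t x y) = g (h t.+1 x y).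
Proof.
rewrite !inE => constt constt1; apply: eq_const_outputs constt constt1 _.
apply: (@eq_on_unaffected _ _ _ g t (fun i => c i == t)) => [i /eqP <- //|i ne_t].
by rewrite hybridS_eq.
Qed.

Lemma hybrid_meets_nonconst (x y : T) : g x != g y ->
  exists t : 'I_k, (h t x y \in B) || (h t.+1 x y \in B).
Proof.
move=> ne_xy; apply/existsP; move: ne_xy; apply: contraNT => /existsPn no_meet.
apply/eqP.
suff const_upto t : t <= k -> g (h t x y) = g x.
  by rewrite -(const_upto k) // /h hybrid_ge // => i; apply: ltn_ord.
elim: t => [_|t IHt lt_tk]; first by rewrite /h hybrid0.
have := no_meet (Ordinal lt_tk); rewrite negb_or => /andP[notB notB1].
by rewrite -(hybrid_step notB notB1) IHt // ltnW.
Qed.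

Lemma card_const_pairs_le (z w : outputs k) : z != w ->
  #|[set x | g x == z]| * #|[set x | g x == w]| <= 2 * k * (#|B| * #|T|).
Proof.
move=> zw; pose P t := [set p : T * T | h t p.1 p.2 \in B].
rewrite -cardsX; apply: (@leq_trans #|\bigcup_(t < k) (P t :|: P t.+1)|).
  apply/subset_leq_card/subsetP => -[x y]; rewrite !inE /= => /andP[/eqP gx /eqP gy].
  have [|t meet_t] := @hybrid_meets_nonconst x y; first by rewrite gx gy.
  by apply/bigcupP; exists t => //; rewrite !inE in meet_t *.
apply: leq_trans (card_bigcup_ord_le _) _.
have -> : 2 * k * (#|B| * #|T|) = \sum_(t < k) 2 * (#|B| * #|T|).
  by rewrite sum_nat_const card_ord [RHS]mulnA (mulnC k).
apply: leq_sum => t _; rewrite mul2n -addnn.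
by apply: leq_trans (leq_card_setU _ _) _; rewrite !card_hybrid_preim.
Qed.

End HybridArgument.

(* b, a0 and a1 count the non-constant, 0^k and 1^k outputs among n inputs. *)
Lemma nat_dichotomy (n k b a0 a1 : nat) : 0 < k ->
  n <= a0 + a1 + b -> a0 * a1 <= 2 * k * (b * n) -> b * (100 * k) < n ->
  2 * n <= a0 * 3 \/ 2 * n <= a1 * 3.
Proof.
move=> k_gt0 cover prod_le small_b.
have [big0|small0] := leqP (2 * n) (a0 * 3); first by left.
have [big1|small1] := leqP (2 * n) (a1 * 3); first by right.
exfalso; pose e := n - 3 * b.
have b100 : 100 * b < n.
  by apply: leq_ltn_trans small_b; rewrite mulnC leq_mul2l leq_pmulr ?orbT.
have e_le0 : e <= 3 * a0 by rewrite /e; lia.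
have e_le1 : e <= 3 * a1 by rewrite /e; lia.
have e_half : n <= 2 * e by rewrite /e; lia.
have sq_e : e * e <= 9 * (a0 * a1) by have := leq_mul e_le0 e_le1; rewrite mulnACA.
have sq_half : n * n <= 4 * (e * e) by have := leq_mul e_half e_half; rewrite mulnACA.
have bkn_small : 100 * (b * k * n) < n * n.
  by rewrite !mulnA ltn_pmul2r; lia.
move: (n * n) (e * e) (a0 * a1) sq_e sq_half bkn_small prod_le.
lia.
Qed.

Local Open Scope ring_scope.

Lemma ratio_le_unif_prob (T : finType) (A : pred T) (p q : nat) :
  (0 < #|T|)%N -> (0 < q)%N ->
  (p%:R / q%:R <= unif_prob A) = (p * #|T| <= #|[set x | A x]| * q)%N.
Proof.
move=> T_gt0 q_gt0; rewrite /unif_prob ler_pdivrMr ?ltr0n // mulrAC.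
by rewrite ler_pdivlMr ?ltr0n // -!natrM ler_nat.
Qed.

Theorem claim5 (k M N : nat) (hk : (2 <= k)%N) (hM : (1 <= M)%N) (hN : (1 <= N)%N)
  (g : inputs M N -> outputs k)
  (hg : forall i : 'I_M, exists j : 'I_k, ~ affects g i j) :
  (1 / (100 * k%:R) <= unif_prob (fun x : inputs M N => (g x != zeros k) && (g x != ones k)))
  \/ (exists z : outputs k, ((z == zeros k) || (z == ones k)) /\
        2 / 3 <= unif_prob (fun x : inputs M N => g x == z)).
Proof.
have k_gt0 : (0 < k)%N by apply: leq_trans hk.
have [c c_unaffected] := fin_all_exists hg.
have T_gt0 : (0 < #|inputs M N|)%N by apply/card_gt0P; exists [ffun => Ordinal hN].
have ne01 : zeros k != ones k by apply/eqP => /ffunP/(_ (Ordinal k_gt0)); rewrite !ffunE.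
have one_k : 1 / (100 * k%:R) = 1%:R / (100 * k)%:R :> rat by rewrite natrM.
have k100_gt0 : (0 < 100 * k)%N by rewrite muln_gt0.
rewrite one_k (ratio_le_unif_prob _ 1 T_gt0 k100_gt0) mul1n.
case: leqP => [|small_b]; [by left | right].
have two_thirds : 2 / 3 = 2%:R / 3%:R :> rat by [].
have [big0|big1] := nat_dichotomy k_gt0 (card_le_const_nonconst g)
  (card_const_pairs_le c_unaffected ne01) small_b.
- exists (zeros k); split; first by rewrite eqxx.
  by rewrite two_thirds (ratio_le_unif_prob _ 2 (q := 3) T_gt0 isT); exact: big0.
- exists (ones k); split; first by rewrite eqxx orbT.
  by rewrite two_thirds (ratio_le_unif_prob _ 2 (q := 3) T_gt0 isT); exact: big1.
Qed.
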